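(* Let $F(x;p):\mathbb{C}^n\times\mathbb{C}^m\to\mathbb{C}^n$ be affine-linear in the parameters $p$, let $p_0,p_1\in\mathbb{C}^m$, and let $H(x,t)=F(x;(1-t)p_0+tp_1)$, $H:\mathbb{C}^n\times[0,1]\to\mathbb{C}^n$, be analytic in $x$. Assume $x^\star\in\mathbb{C}^n$ satisfies $H(x^\star,t_0)=0$ for some $t_0\in[0,1]$. Let $L>0$ be a constant with $L\ge\|\square\partial_x^2H(I_1,[0,1])\|$, where $I_1$ is the interval box centered at $x^\star$ of radius $1$. Suppose the solution path $x(t)$ with $x(t_0)=x^\star$ is nonsingular for all $t\in[t_0,t_0+dt_0]\subset[0,1]$ for some $dt_0>0$. Let $Y=\partial_xH(x^\star,t_0)^{-1}$. Then there exist $0<r<1$ and $0<dt<1$ such that, with $I_r$ the interval box centered at $x^\star$ of radius $r$ and $T_{t_0,dt}=[t_0,t_0+dt]$, one has $K_{x^\star,Y}(I_r,T_{t_0,dt})\subset I_r$ and $\|\mathbf{1}_n-Y\cdot\square\partial_xH(I_r,T_{t_0,dt})\|<\frac{1}{\sqrt2}$; in particular, for every $t\in T_{t_0,dt}$, the path point $x(t)$ is the unique solution of $H(\cdot,t)=0$ in $I_r$.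
   Context: The solution path $x(t)$ satisfies $H(x(t),t)=0$; ''nonsingular'' means $\partial_xH(x(t),t)$ (Jacobian with respect to $x$) is invertible. Complex intervals are products of real intervals for real and imaginary parts; the interval box centered at $c$ of radius $r$ has real and imaginary parts of coordinate $j$ equal to $[\Re c_j-r,\Re c_j+r]$ and $[\Im c_j-r,\Im c_j+r]$. $\square G(I,T)$ denotes an interval extension (computed by interval arithmetic) containing all values of $G$ on $I\times T$. The parametric Krawczyk operator is $K_{x,Y}(I,T)=x-Y\cdot\square H(x,T)+(\mathbf{1}_n-Y\cdot\square\partial_xH(I,T))\cdot(I-x)$. Norms: $\|x\|=\max_i|x_i|$; for an interval box $\|I\|=\max_i\max_{z\in I_i}|z|$; for an interval matrix (or tensor) $M$, $\|M\|$ is the maximum over its members of the operator norm with respect to the max norm. *)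

From HB Require Import structures.
From mathcomp Require Import all_boot all_order all_algebra.
From mathcomp Require Import complex.
From mathcomp Require Import reals.
Set Implicit Arguments. Unset Strict Implicit. Unset Printing Implicit Defensive.
Import Order.TTheory GRing.Theory Num.Theory.
Local Open Scope ring_scope.

Section KrawczykDefs.
Variable R : realType.
Local Notation C := (R[i]).
Local Notation ReC := (@complex.Re R).
Local Notation ImC := (@complex.Im R).

Definition cmod (z : C) : R := Num.sqrt (ReC z ^+ 2 + ImC z ^+ 2).

Definition vnorm n (v : 'cV[C]_n) : R := \big[Num.max/0]_(i < n) cmod (v i 0).

(* max-of-entries norm of a matrix; only used to define differentiability
   of the matrix valued Jacobian (any norm gives the same notion) *)
Definition mnorm n (M : 'M[C]_n) : R :=
  \big[Num.max/0]_(i < n) \big[Num.max/0]_(j < n) cmod (M i j).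

Definition opnorm_le n (M : 'M[C]_n) (c : R) : Prop :=
  forall v : 'cV[C]_n, vnorm (M *m v) <= c * vnorm v.

(* a second-derivative tensor D is represented as k |-> dJ/dx_k (a matrix);
   its action on a direction h is  D[h] = sum_k h_k D_k. *)
Definition tapply n (D : 'I_n -> 'M[C]_n) (h : 'cV[C]_n) : 'M[C]_n :=
  \sum_(k < n) h k 0 *: D k.

Definition tnorm_le n (D : 'I_n -> 'M[C]_n) (c : R) : Prop :=
  forall h v : 'cV[C]_n, vnorm (tapply D h *m v) <= c * vnorm h * vnorm v.

Definition cderiv n (f : 'cV[C]_n -> 'cV[C]_n) (Df : 'M[C]_n) (x : 'cV[C]_n) :=
  forall eps : R, 0 < eps -> exists2 delta : R, 0 < delta &
    forall h : 'cV[C]_n, vnorm h < delta ->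
      vnorm (f (x + h) - f x - Df *m h) <= eps * vnorm h.

Definition cderivM n (J : 'cV[C]_n -> 'M[C]_n) (D : 'I_n -> 'M[C]_n)
    (x : 'cV[C]_n) :=
  forall eps : R, 0 < eps -> exists2 delta : R, 0 < delta &
    forall h : 'cV[C]_n, vnorm h < delta ->
      mnorm (J (x + h) - J x - tapply D h) <= eps * vnorm h.

Definition rint := (R * R)%type.
Definition in_rint (I : rint) (x : R) : bool := (I.1 <= x) && (x <= I.2).
Definition rwidth (I : rint) : R := I.2 - I.1.

Definition radd (I J : rint) : rint := (I.1 + J.1, I.2 + J.2).
Definition rsub (I J : rint) : rint := (I.1 - J.2, I.2 - J.1).
Definition rmul (I J : rint) : rint :=
  (Num.min (Num.min (I.1 * J.1) (I.1 * J.2)) (Num.min (I.2 * J.1) (I.2 * J.2)),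
   Num.max (Num.max (I.1 * J.1) (I.1 * J.2)) (Num.max (I.2 * J.1) (I.2 * J.2))).

Definition cint := (rint * rint)%type.
Definition in_cint (I : cint) (z : C) : bool := in_rint I.1 (ReC z) && in_rint I.2 (ImC z).
Definition cpt (z : C) : cint := ((ReC z, ReC z), (ImC z, ImC z)).
Definition cadd (I J : cint) : cint := (radd I.1 J.1, radd I.2 J.2).
Definition csub (I J : cint) : cint := (rsub I.1 J.1, rsub I.2 J.2).
(* (a + ib)(c + id) = (ac - bd) + i(ad + bc), evaluated in real interval arithmetic *)
Definition cmul (I J : cint) : cint :=
  (rsub (rmul I.1 J.1) (rmul I.2 J.2), radd (rmul I.1 J.2) (rmul I.2 J.1)).

Definition ibox n := 'I_n -> cint.
Definition imx n := 'I_n -> 'I_n -> cint.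
Definition iten n := 'I_n -> 'I_n -> 'I_n -> cint.   (* indexed (k, i, j) *)

Definition in_box n (B : ibox n) (v : 'cV[C]_n) : Prop := forall i, in_cint (B i) (v i 0).
Definition in_imx n (B : imx n) (M : 'M[C]_n) : Prop := forall i j, in_cint (B i j) (M i j).
Definition in_iten n (B : iten n) (D : 'I_n -> 'M[C]_n) : Prop :=
  forall k i j, in_cint (B k i j) (D k i j).
Definition box_sub n (A B : ibox n) : Prop := forall v, in_box A v -> in_box B v.

Definition box_width_le n (B : ibox n) (d : R) : Prop :=
  forall i, rwidth (B i).1 <= d /\ rwidth (B i).2 <= d.

Definition cbox n (c : 'cV[C]_n) (r : R) : ibox n :=
  fun i => ((ReC (c i 0) - r, ReC (c i 0) + r), (ImC (c i 0) - r, ImC (c i 0) + r)).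
Definition ptbox n (c : 'cV[C]_n) : ibox n := fun i => cpt (c i 0).
Definition ptmx n (M : 'M[C]_n) : imx n := fun i j => cpt (M i j).

Definition isum n (f : 'I_n -> cint) : cint := \big[cadd/cpt 0]_(j < n) f j.
Definition imxv n (A : imx n) (v : ibox n) : ibox n :=
  fun i => isum (fun j => cmul (A i j) (v j)).
Definition imxm n (A B : imx n) : imx n :=
  fun i k => isum (fun j => cmul (A i j) (B j k)).
Definition ibadd n (A B : ibox n) : ibox n := fun i => cadd (A i) (B i).
Definition ibsub n (A B : ibox n) : ibox n := fun i => csub (A i) (B i).
Definition imsub n (A B : imx n) : imx n := fun i j => csub (A i j) (B i j).

Definition id_minus n (Y : 'M[C]_n) (B : imx n) : imx n :=
  imsub (ptmx 1%:M) (imxm (ptmx Y) B).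

(* parametric Krawczyk operator, given the interval evaluations
   BH = box H(x, T) and BJ = box d_xH(I, T):
   K = x - Y . BH + (1_n - Y . BJ) . (I - x) *)
Definition krawczyk n (x : 'cV[C]_n) (Y : 'M[C]_n) (BH : ibox n) (BJ : imx n)
    (I : ibox n) : ibox n :=
  ibadd (ibsub (ptbox x) (imxv (ptmx Y) BH))
        (imxv (id_minus Y BJ) (ibsub I (ptbox x))).

Definition encloses_v n (G : 'cV[C]_n -> R -> 'cV[C]_n) (E : ibox n -> rint -> ibox n) :=
  forall I T x t, 0 <= T.1 -> T.2 <= 1 -> in_box I x -> in_rint T t ->
    in_box (E I T) (G x t).
Definition encloses_m n (G : 'cV[C]_n -> R -> 'M[C]_n) (E : ibox n -> rint -> imx n) :=
  forall I T x t, 0 <= T.1 -> T.2 <= 1 -> in_box I x -> in_rint T t ->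
    in_imx (E I T) (G x t).
Definition encloses_t n (G : 'cV[C]_n -> R -> 'I_n -> 'M[C]_n)
    (E : ibox n -> rint -> iten n) :=
  forall I T x t, 0 <= T.1 -> T.2 <= 1 -> in_box I x -> in_rint T t ->
    in_iten (E I T) (G x t).

(* convergence of the interval extension (as enjoyed by interval arithmetic):
   the enclosure of a small box around (x,t) is close to G(x,t) *)
Definition converges_v n (G : 'cV[C]_n -> R -> 'cV[C]_n) (E : ibox n -> rint -> ibox n) :=
  forall x t, 0 <= t <= 1 -> forall eps : R, 0 < eps -> exists2 delta : R, 0 < delta &
    forall I T, 0 <= T.1 -> T.2 <= 1 -> in_box I x -> in_rint T t ->
      box_width_le I delta -> rwidth T <= delta ->
      forall y, in_box (E I T) y -> vnorm (y - G x t) <= eps.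
Definition converges_m n (G : 'cV[C]_n -> R -> 'M[C]_n) (E : ibox n -> rint -> imx n) :=
  forall x t, 0 <= t <= 1 -> forall eps : R, 0 < eps -> exists2 delta : R, 0 < delta &
    forall I T, 0 <= T.1 -> T.2 <= 1 -> in_box I x -> in_rint T t ->
      box_width_le I delta -> rwidth T <= delta ->
      forall M, in_imx (E I T) M -> mnorm (M - G x t) <= eps.

Definition affine_in_params n m (F : 'cV[C]_n -> 'cV[C]_m -> 'cV[C]_n) :=
  forall x p q (l : C), F x ((1 - l) *: p + l *: q) = (1 - l) *: F x p + l *: F x q.

Definition homotopy n m (F : 'cV[C]_n -> 'cV[C]_m -> 'cV[C]_n) (p0 p1 : 'cV[C]_m)
    (x : 'cV[C]_n) (t : R) : 'cV[C]_n :=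
  F x ((1 - (t%:C)%C) *: p0 + (t%:C)%C *: p1).

Definition path_continuous_on n (xp : R -> 'cV[C]_n) (a b : R) :=
  forall s, a <= s <= b -> forall eps : R, 0 < eps -> exists2 delta : R, 0 < delta &
    forall s', a <= s' <= b -> `|s' - s| < delta -> vnorm (xp s' - xp s) < eps.

End KrawczykDefs.

(* Everything is controlled by the convergence of the interval extensions at (x*, t0).
   Since Y = DH(x*, t0)^-1, once the enclosure of DH over (I_r, T) is eJ-close to DH(x*, t0)
   the interval matrix 1 - Y.□DH(I_r, T) has entries of size O(eJ), and □H(x*, T) is
   eH-close to H(x*, t0) = 0; interval arithmetic propagates these errors linearly, which
   keeps K(I_r, T) within 3r/4 of x* and the norm of 1 - Y.□DH(I_r, T) below 1/2.
   The same Jacobian bound makes the Newton map z |-> z - Y H(z, t) a 3/4-contraction on I_r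
   (locally by complex differentiability, globally along segments by real induction). Hence
   H(., t) has at most one zero in I_r, every such zero lies within r/2 of x*, and the
   continuous path x(t), which starts at x*, can never cross the shell r/2 < |x - x*| <= r. *)

From HB Require Import structures.
From mathcomp Require Import all_boot all_order all_algebra.
From mathcomp Require Import complex.
From mathcomp Require Import reals classical_sets.
From mathcomp Require Import ring lra.
Import Order.TTheory GRing.Theory Num.Theory.
Local Open Scope ring_scope.

Set Implicit Arguments.
Unset Strict Implicit.

Section ComplexModulus.
Variable R : realType.
Local Notation C := (R[i]).
Local Notation Re := (@complex.Re R).
Local Notation Im := (@complex.Im R).
Implicit Types (a b z : C) (s : R).

Lemma cReD a b : Re (a + b) = Re a + Re b. Proof. by case: a; case: b. Qed.
Lemma cImD a b : Im (a + b) = Im a + Im b. Proof. by case: a; case: b. Qed.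
Lemma cReB a b : Re (a - b) = Re a - Re b. Proof. by case: a; case: b. Qed.
Lemma cImB a b : Im (a - b) = Im a - Im b. Proof. by case: a; case: b. Qed.
Lemma cReM a b : Re (a * b) = Re a * Re b - Im a * Im b. Proof. by case: a; case: b. Qed.
Lemma cImM a b : Im (a * b) = Re a * Im b + Im a * Re b. Proof. by case: a; case: b. Qed.
Lemma cRe_realM s z : Re (s%:C%C * z) = s * Re z.
Proof. by case: z => x y /=; rewrite mul0r subr0. Qed.
Lemma cIm_realM s z : Im (s%:C%C * z) = s * Im z.
Proof. by case: z => x y /=; rewrite mul0r addr0. Qed.

Lemma cmodE z : (cmod z)%:C%C = `|z|.
Proof. by rewrite normc_def. Qed.

Lemma cmod_ge0 z : 0 <= cmod z. Proof. exact: sqrtr_ge0. Qed.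

Lemma cmodD a b : cmod (a + b) <= cmod a + cmod b.
Proof. by rewrite -lecR rmorphD /= !cmodE ler_normD. Qed.

Lemma cmodM a b : cmod (a * b) = cmod a * cmod b.
Proof. by apply: complexI; rewrite rmorphM /= !cmodE normrM. Qed.

Lemma cmodN z : cmod (- z) = cmod z.
Proof. by apply: complexI; rewrite !cmodE normrN. Qed.

Lemma cmod0 : cmod (0 : C) = 0.
Proof. by apply: complexI; rewrite cmodE normr0. Qed.

Lemma cmod_eq0 z : cmod z = 0 -> z = 0.
Proof. by move=> z0; apply/eqP; rewrite -normr_eq0 -cmodE z0. Qed.

Lemma cmod_real s : cmod s%:C%C = `|s|.
Proof. by rewrite /cmod /= expr0n /= addr0 sqrtr_sqr. Qed.

Lemma cmod_sum n (f : 'I_n -> C) : cmod (\sum_i f i) <= \sum_i cmod (f i).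
Proof.
rewrite -lecR cmodE rmorph_sum /=; apply: le_trans (ler_norm_sum _ _ _) _.
by apply: ler_sum => i _; rewrite cmodE.
Qed.

Lemma Re_le_cmod z : `|Re z| <= cmod z.
Proof. by rewrite /cmod -sqrtr_sqr ler_sqrt ?lerDl ?addr_ge0 ?sqr_ge0. Qed.

Lemma Im_le_cmod z : `|Im z| <= cmod z.
Proof. by rewrite /cmod -sqrtr_sqr ler_sqrt ?lerDr ?addr_ge0 ?sqr_ge0. Qed.

Lemma cmod_le_ReIm z : cmod z <= `|Re z| + `|Im z|.
Proof.
rewrite /cmod -[leRHS]ger0_norm ?addr_ge0 // -sqrtr_sqr ler_sqrt ?sqr_ge0 //.
rewrite -[Re z ^+ 2]real_normK ?num_real // -[Im z ^+ 2]real_normK ?num_real //.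
by rewrite sqrrD -addrA lerD2l lerDr mulrn_wge0 ?mulr_ge0.
Qed.

End ComplexModulus.

Section MaxNorm.
Variables (R : realType) (n : nat).
Local Notation C := (R[i]).
Implicit Types (u v : 'cV[C]_n) (M : 'M[C]_n).

Lemma cmod_le_vnorm v i : cmod (v i 0) <= vnorm v.
Proof. exact: (le_bigmax 0 (fun i => cmod (v i 0)) i). Qed.

Lemma vnorm_ge0 v : 0 <= vnorm v.
Proof.
by rewrite /vnorm; elim/big_ind: _ => // [x y|i _]; rewrite ?le_max ?cmod_ge0 // => ->.
Qed.

Lemma vnorm_le v c : 0 <= c -> (forall i, cmod (v i 0) <= c) -> vnorm v <= c.
Proof. by move=> c0 vc; apply: bigmax_le. Qed.

Lemma vnorm0 : vnorm (0 : 'cV[C]_n) = 0.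
Proof. by apply/le_anti; rewrite vnorm_ge0 vnorm_le // => i; rewrite mxE cmod0. Qed.

Lemma vnorm_le0 v : vnorm v <= 0 -> v = 0.
Proof.
move=> v0; apply/matrixP => i j; rewrite (ord1 j) mxE; apply: cmod_eq0.
by apply/le_anti; rewrite cmod_ge0 (le_trans (cmod_le_vnorm v i)).
Qed.

Lemma vnormD u v : vnorm (u + v) <= vnorm u + vnorm v.
Proof.
apply: vnorm_le => [|i]; first by rewrite addr_ge0 ?vnorm_ge0.
by rewrite mxE (le_trans (cmodD _ _)) // lerD ?cmod_le_vnorm.
Qed.

Lemma vnormN v : vnorm (- v) = vnorm v.
Proof. by apply: eq_bigr => i _; rewrite mxE cmodN. Qed.

Lemma vnormB u v : vnorm (u - v) = vnorm (v - u).
Proof. by rewrite -vnormN opprB. Qed.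

Lemma vnormZ (a : C) v : vnorm (a *: v) <= cmod a * vnorm v.
Proof.
apply: vnorm_le => [|i]; first by rewrite mulr_ge0 ?cmod_ge0 ?vnorm_ge0.
by rewrite mxE cmodM ler_wpM2l ?cmod_ge0 ?cmod_le_vnorm.
Qed.

Lemma dist_vnorm_le u v : `|vnorm u - vnorm v| <= vnorm (u - v).
Proof.
have tri (w w' : 'cV[C]_n) : vnorm w - vnorm w' <= vnorm (w - w').
  by have := vnormD (w - w') w'; rewrite subrK lerBlDr.
by rewrite ler_norml tri lerNl opprB vnormB tri.
Qed.

Lemma cmod_le_mnorm M i j : cmod (M i j) <= mnorm M.
Proof.
apply: le_trans (le_bigmax 0 (fun i => \big[Num.max/0]_(j < n) cmod (M i j)) i).
exact: (le_bigmax 0 (fun j => cmod (M i j)) j).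
Qed.

Lemma mnorm_ge0 M : 0 <= mnorm M.
Proof.
rewrite /mnorm; elim/big_ind: _ => // [x y|i _]; first by rewrite le_max => ->.
by elim/big_ind: _ => // [x y|j _]; rewrite ?le_max ?cmod_ge0 // => ->.
Qed.

Lemma vnorm_mulmx_le M v b : 0 <= b -> (forall i j, cmod (M i j) <= b) ->
  vnorm (M *m v) <= n%:R * b * vnorm v.
Proof.
move=> b0 Mb; apply: vnorm_le => [|i]; first by rewrite !mulr_ge0 ?vnorm_ge0.
rewrite mxE (le_trans (cmod_sum _)) // -mulrA mulr_natl -[n in _ *+ n]card_ord.
by rewrite -sumr_const ler_sum // => j _; rewrite cmodM ler_pM ?cmod_ge0 ?cmod_le_vnorm.
Qed.

Lemma vnorm_mulmx_mnorm M v : vnorm (M *m v) <= n%:R * mnorm M * vnorm v.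
Proof. exact/vnorm_mulmx_le/cmod_le_mnorm/mnorm_ge0. Qed.

End MaxNorm.

Section IntervalErrors.
Variable R : realType.
Local Notation C := (R[i]).
Local Notation Re := (@complex.Re R).
Local Notation Im := (@complex.Im R).

Definition rint_within (I : rint R) (c e : R) := `|I.1 - c| <= e /\ `|I.2 - c| <= e.
Definition cint_within (I : cint R) (z : C) (e : R) :=
  rint_within I.1 (Re z) e /\ rint_within I.2 (Im z) e.

Lemma rint_within_le I c e e' : e <= e' -> rint_within I c e -> rint_within I c e'.
Proof. by move=> ee' [lo hi]; split; apply: le_trans ee'. Qed.

Lemma cint_within_le I z e e' : e <= e' -> cint_within I z e -> cint_within I z e'.
Proof. by move=> ee' [re im]; split; apply: rint_within_le ee' _. Qed.

Lemma cint_within_pt z : cint_within (cpt z) z 0.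
Proof. by split; split; rewrite /= subrr normr0. Qed.

Lemma in_rint_within I c e x : rint_within I c e -> in_rint I x -> `|x - c| <= e.
Proof.
rewrite /rint_within /in_rint !ler_norml => -[/andP[? ?] /andP[? ?]] /andP[? ?].
by apply/andP; split; lra.
Qed.

Lemma rint_withinD I J a b e1 e2 : rint_within I a e1 -> rint_within J b e2 ->
  rint_within (radd I J) (a + b) (e1 + e2).
Proof.
rewrite /rint_within /= !ler_norml => -[/andP[? ?] /andP[? ?]] [/andP[? ?] /andP[? ?]].
by split; apply/andP; split; lra.
Qed.

Lemma rint_withinB I J a b e1 e2 : rint_within I a e1 -> rint_within J b e2 ->
  rint_within (rsub I J) (a - b) (e1 + e2).
Proof.
rewrite /rint_within /= !ler_norml => -[/andP[? ?] /andP[? ?]] [/andP[? ?] /andP[? ?]].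
by split; apply/andP; split; lra.
Qed.

Lemma dist_mul_le (x y a b e1 e2 : R) : `|x - a| <= e1 -> `|y - b| <= e2 ->
  `|x * y - a * b| <= e1 * (`|b| + e2) + `|a| * e2.
Proof.
move=> xa yb; have -> : x * y - a * b = (x - a) * y + a * (y - b) by ring.
apply: le_trans (ler_normD _ _) _; rewrite !normrM lerD ?ler_wpM2l //.
apply: ler_pM => //; have := ler_normD (y - b) b; rewrite subrK; lra.
Qed.

Lemma rint_withinM I J a b e1 e2 : rint_within I a e1 -> rint_within J b e2 ->
  rint_within (rmul I J) (a * b) (e1 * (`|b| + e2) + `|a| * e2).
Proof.
move=> [lo1 hi1] [lo2 hi2].
have minmax u v e : `|u - a * b| <= e -> `|v - a * b| <= e ->
    `|Num.min u v - a * b| <= e /\ `|Num.max u v - a * b| <= e.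
  by move=> ? ?; rewrite minEle maxEle; case: ifP.
have [m1 M1] := minmax _ _ _ (dist_mul_le lo1 lo2) (dist_mul_le lo1 hi2).
have [m2 M2] := minmax _ _ _ (dist_mul_le hi1 lo2) (dist_mul_le hi1 hi2).
by split; [case: (minmax _ _ _ m1 m2) | case: (minmax _ _ _ M1 M2)].
Qed.

Lemma cint_withinD I J a b e1 e2 : cint_within I a e1 -> cint_within J b e2 ->
  cint_within (cadd I J) (a + b) (e1 + e2).
Proof. by move=> [? ?] [? ?]; split; rewrite /= ?cReD ?cImD; apply: rint_withinD. Qed.

Lemma cint_withinB I J a b e1 e2 : cint_within I a e1 -> cint_within J b e2 ->
  cint_within (csub I J) (a - b) (e1 + e2).
Proof. by move=> [? ?] [? ?]; split; rewrite /= ?cReB ?cImB; apply: rint_withinB. Qed.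

Lemma cint_withinM I J a b e1 e2 : 0 <= e1 -> 0 <= e2 ->
  cint_within I a e1 -> cint_within J b e2 ->
  cint_within (cmul I J) (a * b) (2 * (e1 * (cmod b + e2) + cmod a * e2)).
Proof.
move=> e10 e20 [reI imI] [reJ imJ].
set E := e1 * (cmod b + e2) + cmod a * e2.
have within_E I' J' x y : `|x| <= cmod a -> `|y| <= cmod b ->
    rint_within I' x e1 -> rint_within J' y e2 -> rint_within (rmul I' J') (x * y) E.
  move=> xa yb xI yJ; apply: rint_within_le (rint_withinM xI yJ).
  by rewrite lerD ?ler_wpM2l ?ler_wpM2r // lerD2r.
rewrite mulr2n mulrDl mul1r; split; rewrite /= ?cReM ?cImM.
  by apply: rint_withinB; apply: within_E; rewrite ?Re_le_cmod ?Im_le_cmod.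
by apply: rint_withinD; apply: within_E; rewrite ?Re_le_cmod ?Im_le_cmod.
Qed.

Lemma cint_within_ptM a J b e : 0 <= e -> cint_within J b e ->
  cint_within (cmul (cpt a) J) (a * b) (2 * (cmod a * e)).
Proof.
move=> e0 /(cint_withinM (lexx 0) e0 (cint_within_pt a)).
by rewrite mul0r add0r.
Qed.

Lemma cint_within_isum n (f : 'I_n -> cint R) (g : 'I_n -> C) e :
  (forall j, cint_within (f j) (g j) e) -> cint_within (isum f) (\sum_j g j) (n%:R * e).
Proof.
move=> fg; rewrite mulr_natl -[n in _ *+ n]card_ord -sumr_const /isum.
elim/big_ind3: _ => //; first exact: cint_within_pt.
by move=> I z e1 J w e2; apply: cint_withinD.
Qed.

Lemma cmod_le_cint_within I z e w : cint_within I z e -> in_cint I w -> cmod (w - z) <= 2 * e.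
Proof.
move=> [re im] /andP[/(in_rint_within re) wre /(in_rint_within im) wim].
by rewrite (le_trans (cmod_le_ReIm _)) // cReB cImB mulr2n mulrDl mul1r lerD.
Qed.

Lemma cint_within_of_cmod I z e : in_cint I z ->
  (forall w, in_cint I w -> cmod (w - z) <= e) -> cint_within I z e.
Proof.
move=> /andP[/andP[a1 a2] /andP[b1 b2]] dev.
have re x : I.1.1 <= x <= I.1.2 -> `|x - Re z| <= e.
  move=> xI; apply: le_trans (dev (x +i* Im z)%C _).
    by apply: le_trans (Re_le_cmod _); rewrite cReB.
  by rewrite /in_cint /in_rint /= xI b1 b2.
have im x : I.2.1 <= x <= I.2.2 -> `|x - Im z| <= e.
  move=> xI; apply: le_trans (dev (Re z +i* x)%C _).
    by apply: le_trans (Im_le_cmod _); rewrite cImB.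
  by rewrite /in_cint /in_rint /= xI a1 a2.
by split; split; [apply: re | apply: re | apply: im | apply: im];
  rewrite lexx ?(le_trans a1 a2) ?(le_trans b1 b2).
Qed.

End IntervalErrors.

Section Boxes.
Variables (R : realType) (n : nat).
Local Notation C := (R[i]).
Local Notation Re := (@complex.Re R).
Local Notation Im := (@complex.Im R).
Implicit Types (c v z : 'cV[C]_n) (r : R).

Lemma in_ptbox c : in_box (ptbox c) c.
Proof. by move=> i; rewrite /in_cint /in_rint /= !lexx. Qed.

Lemma in_cbox_center c r : 0 <= r -> in_box (cbox c r) c.
Proof. by move=> r0 i; rewrite /in_cint /in_rint /= !gerBl !lerDl r0. Qed.

Lemma ptbox_width_le c d : 0 <= d -> box_width_le (ptbox c) d.
Proof. by move=> d0 i; rewrite /rwidth /= !subrr. Qed.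

Lemma cbox_width_le c r d : r + r <= d -> box_width_le (cbox c r) d.
Proof. by move=> rd i; rewrite /rwidth /=; split; lra. Qed.

Lemma cbox_within c r k : 0 <= r -> cint_within (cbox c r k) (c k 0) r.
Proof. by move=> r0; split; split; rewrite /= addrAC subrr add0r ?normrN ger0_norm. Qed.

Lemma in_cbox_vnorm c z r : vnorm (z - c) <= r -> in_box (cbox c r) z.
Proof.
move=> zc i; have := le_trans (cmod_le_vnorm (z - c) i) zc; rewrite !mxE => zci.
move: (le_trans (Re_le_cmod _) zci) (le_trans (Im_le_cmod _) zci).
rewrite cReB cImB !ler_norml => /andP[? ?] /andP[? ?].
by rewrite /in_cint /in_rint /=; apply/andP; split; apply/andP; split; lra.
Qed.

Lemma in_cbox_within I c i e r w :
  cint_within I (c i 0) e -> e <= r -> in_cint I w -> in_cint (cbox c r i) w.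
Proof.
move=> [re im] er /andP[/(in_rint_within re) + /(in_rint_within im)].
rewrite !ler_norml => /andP[? ?] /andP[? ?].
by rewrite /in_cint /in_rint /=; apply/andP; split; apply/andP; split; lra.
Qed.

Lemma cbox_convex c r z1 z2 (s : R) :
  in_box (cbox c r) z1 -> in_box (cbox c r) z2 -> 0 <= s <= 1 ->
  in_box (cbox c r) (z2 + s%:C%C *: (z1 - z2)).
Proof.
move=> z1c z2c /andP[s0 s1] i; move: (z1c i) (z2c i).
rewrite /in_cint /in_rint /= !mxE cReD cImD cRe_realM cIm_realM cReB cImB.
move=> /andP[/andP[? ?] /andP[? ?]] /andP[/andP[? ?] /andP[? ?]].
by apply/andP; split; apply/andP; split; nra.
Qed.

Lemma box_within_of_vnorm (B : ibox R n) v e : in_box B v ->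
  (forall y, in_box B y -> vnorm (y - v) <= e) -> forall j, cint_within (B j) (v j 0) e.
Proof.
move=> Bv dev j; apply: cint_within_of_cmod (Bv j) _ => w Bw.
pose y := \col_k (if k == j then w else v k 0).
have By : in_box B y by move=> k; rewrite mxE; case: eqP => [->|].
by apply: le_trans (dev y By); apply: le_trans (cmod_le_vnorm _ j); rewrite !mxE eqxx.
Qed.

Lemma imx_within_of_mnorm (B : imx R n) M e : in_imx B M ->
  (forall M', in_imx B M' -> mnorm (M' - M) <= e) ->
  forall i j, cint_within (B i j) (M i j) e.
Proof.
move=> BM dev i j; apply: cint_within_of_cmod (BM i j) _ => w Bw.
pose M' := \matrix_(a, b) (if (a == i) && (b == j) then w else M a b).
have BM' : in_imx B M'.
  by move=> a b; rewrite mxE; case: eqP => [->|]; case: eqP => [->|].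
by apply: le_trans (dev M' BM'); apply: le_trans (cmod_le_mnorm _ i j); rewrite !mxE !eqxx.
Qed.

End Boxes.

Section KrawczykEnclosure.
Variables (R : realType) (n : nat).
Local Notation C := (R[i]).
Variable Y : 'M[C]_n.
Local Notation kY := (n%:R * mnorm Y).

Lemma imxv_pt_within (B : ibox R n) (g : 'I_n -> C) e : 0 <= e ->
  (forall j, cint_within (B j) (g j) e) ->
  forall i, cint_within (imxv (ptmx Y) B i) (\sum_j Y i j * g j) (2 * kY * e).
Proof.
move=> e0 Bg i; have -> : 2 * kY * e = n%:R * (2 * (mnorm Y * e)) by ring.
apply: cint_within_isum => j; apply: cint_within_le (cint_within_ptM (Y i j) e0 (Bg j)).
by rewrite ler_wpM2l // ler_wpM2r // cmod_le_mnorm.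
Qed.

Lemma id_minus_within D (BJ : imx R n) e : 0 <= e -> Y *m D = 1%:M ->
  (forall j k, cint_within (BJ j k) (D j k) e) ->
  forall i k, cint_within (id_minus Y BJ i k) 0 (2 * kY * e).
Proof.
move=> e0 YD BD i k; have := imxv_pt_within e0 (fun j => BD j k) i.
have -> : \sum_j Y i j * D j k = 1%:M i k by rewrite -YD mxE.
by move/(cint_withinB (cint_within_pt (1%:M i k))); rewrite add0r subrr.
Qed.

Lemma krawczyk_within x BH BJ r eH d : 0 <= r -> 0 <= eH -> 0 <= d ->
  (forall j, cint_within (BH j) 0 eH) -> (forall i k, cint_within (id_minus Y BJ i k) 0 d) ->
  forall i, cint_within (krawczyk x Y BH BJ (cbox x r) i) (x i 0)
                        (2 * kY * eH + 2 * n%:R * d * r).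
Proof.
move=> r0 eH0 d0 BH0 BJ0 i.
have Ir k : cint_within (ibsub (cbox x r) (ptbox x) k) 0 r.
  have := cint_withinB (cbox_within x k r0) (cint_within_pt (x k 0)).
  by rewrite subrr addr0.
have sum0 (f : 'I_n -> C) : \sum_j f j * 0 = 0 by rewrite big1 // => j _; rewrite mulr0.
have J_Ir : cint_within (imxv (id_minus Y BJ) (ibsub (cbox x r) (ptbox x)) i)
              (\sum_(k < n) (0 : C) * 0) (2 * n%:R * d * r).
  have -> : 2 * n%:R * d * r = n%:R * (2 * (d * r)) by ring.
  apply: cint_within_isum => k; apply: cint_within_le (cint_withinM d0 r0 (BJ0 i k) (Ir k)).
  by rewrite cmod0 add0r mul0r addr0.
have YBH := imxv_pt_within eH0 BH0 i.
rewrite sum0 in J_Ir; rewrite /= sum0 in YBH.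
have := cint_withinD (cint_withinB (cint_within_pt (x i 0)) YBH) J_Ir.
by rewrite subr0 addr0 add0r.
Qed.

Lemma opnorm_le_within (B : imx R n) d : 0 <= d ->
  (forall i k, cint_within (B i k) 0 d) -> forall M, in_imx B M -> opnorm_le M (2 * n%:R * d).
Proof.
move=> d0 B0 M BM v; have -> : 2 * n%:R * d = n%:R * (2 * d) by ring.
apply: vnorm_mulmx_le; first by rewrite mulr_ge0.
by move=> i j; have := cmod_le_cint_within (B0 i j) (BM i j); rewrite subr0.
Qed.

End KrawczykEnclosure.

Section RealInduction.
Variable R : realType.

Lemma real_induction (a b : R) (P : R -> Prop) : a <= b ->
  (forall s, a <= s <= b -> (forall u, a <= u < s -> P u) ->
     exists2 d, 0 < d & forall u, a <= u <= b -> u < s + d -> P u) ->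
  forall t, a <= t <= b -> P t.
Proof.
move=> ab step.
pose E := [set x | a <= x <= b /\ forall u, a <= u < x -> P u]%classic.
have Ea : E a by split=> [|u /andP[au ua]]; [rewrite lexx ab | lra].
have supE : has_sup E by split; [exists a | exists b => x [/andP[_ ?] _]].
have as_ : a <= sup E by apply: sup_upper_bound.
have sb : sup E <= b by apply: ge_sup; [exists a | move=> x [/andP[_ ?] _]].
have below u : a <= u < sup E -> P u.
  move=> /andP[au us]; have us' : 0 < sup E - u by rewrite subr_gt0.
  have [x [_ Px] ux] := sup_adherent us' supE.
  by apply: Px; rewrite au; lra.
have [d d0 Pd] := step (sup E) (ltac:(by rewrite as_ sb)) below.
have [bsd|sdb] := ltP b (sup E + d).
  by move=> t /andP[a_t tb]; apply: Pd; rewrite ?a_t ?tb //; lra.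
have : E (sup E + d / 2).
  split=> [|u /andP[au ud]]; first by apply/andP; split; lra.
  by apply: Pd; [apply/andP; split|]; lra.
by move/(sup_upper_bound supE); lra.
Qed.

Lemma exists_left_near (a s d : R) : a < s -> 0 < d -> exists2 u, a <= u < s & s - u < d.
Proof.
move=> as_ d0; exists (Num.max a (s - d / 2)).
  by rewrite le_max lexx gt_max as_; lra.
by rewrite ltrBlDr -ltrBlDl lt_max; lra.
Qed.

Lemma increment_le_local_lipschitz (phi : R -> R) (a b K : R) : a <= b ->
  (forall s, a <= s <= b -> exists2 d, 0 < d &
     forall u, a <= u <= b -> `|u - s| < d -> `|phi u - phi s| <= K * `|u - s|) ->
  phi b - phi a <= K * (b - a).
Proof.
move=> ab loc; suff: forall t, a <= t <= b -> phi t - phi a <= K * (t - a).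
  by apply; rewrite ab lexx.
apply: real_induction ab _ => s /andP[as_ sb] IH.
have [d d0 Ld] := loc s (ltac:(by rewrite as_ sb)).
have Ps : phi s - phi a <= K * (s - a).
  have [<-|a_s] := eqVneq a s; first by rewrite !subrr mulr0.
  have a_lt_s : a < s by rewrite lt_neqAle a_s as_.
  have [u /andP[au us] su] := exists_left_near a_lt_s d0.
  have us_norm : `|u - s| = s - u by rewrite distrC gtr0_norm ?subr_gt0.
  have := Ld u (ltac:(rewrite au; lra)) (ltac:(by rewrite us_norm)).
  rewrite us_norm distrC ler_norml => /andP[_ usK].
  by have := IH u (ltac:(by rewrite au us)); nra.
exists d => // u /andP[au ub] usd; have [us|su] := ltP u s; first by apply: IH; rewrite au us.
have su_norm : `|u - s| = u - s by rewrite ger0_norm ?subr_ge0.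
have := Ld u (ltac:(by rewrite au ub)) (ltac:(rewrite su_norm; lra)).
by rewrite su_norm ler_norml => /andP[_ suK]; nra.
Qed.

End RealInduction.

Section ContinuityArguments.
Variables (R : realType) (n : nat).
Local Notation C := (R[i]).
Local Notation vec := ('cV[C]_n).

Lemma path_continuous_on_sub (xp : R -> vec) a b b' :
  b' <= b -> path_continuous_on xp a b -> path_continuous_on xp a b'.
Proof.
move=> bb' xpc s /andP[as_ sb'] e e0.
have [d d0 xpd] := xpc s (ltac:(rewrite as_; lra)) e e0.
by exists d => // u /andP[au ub'] us; apply: xpd; rewrite ?au //; lra.
Qed.

Lemma path_trapped (xp : R -> vec) (c : vec) a b rho r : rho < r ->
  path_continuous_on xp a b -> vnorm (xp a - c) <= rho ->
  (forall t, a <= t <= b -> vnorm (xp t - c) <= r -> vnorm (xp t - c) <= rho) ->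
  forall t, a <= t <= b -> vnorm (xp t - c) <= rho.
Proof.
move=> rho_r xpc xpa trap t tab; have ab : a <= b by case/andP: tab; apply: le_trans.
move: t tab; apply: real_induction ab _.
move=> s sab IH; have [d d0 xpd] := xpc s sab (r - rho) (ltac:(by rewrite subr_gt0)).
have near u : a <= u <= b -> `|u - s| < d ->
    vnorm (xp u - c) < vnorm (xp s - c) + (r - rho) /\
    vnorm (xp s - c) < vnorm (xp u - c) + (r - rho).
  move=> uab us; have := dist_vnorm_le (xp u - c) (xp s - c).
  rewrite opprB addrA subrK => /le_lt_trans/(_ (xpd u uab us)).
  by rewrite ltr_norml; lra.
have Ps : vnorm (xp s - c) <= rho.
  case/andP: sab => as_ sb; have [<-//|a_s] := eqVneq a s.
  have a_lt_s : a < s by rewrite lt_neqAle a_s as_.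
  have [u /andP[au us] su] := exists_left_near a_lt_s d0.
  have us_d : `|u - s| < d by rewrite distrC gtr0_norm ?subr_gt0.
  have [_ xps] := near u (ltac:(rewrite au; lra)) us_d.
  have Pu := IH u (ltac:(by rewrite au us)).
  by apply: trap; rewrite ?as_ ?sb //; lra.
exists d => // u uab usd; have [us|su] := ltP u s.
  by apply: IH; case/andP: uab => -> _.
have [xpu _] := near u uab (ltac:(rewrite ger0_norm ?subr_ge0 //; lra)).
by apply: trap => //; lra.
Qed.

Lemma lipschitz_on_convex (g : vec -> vec) (S : vec -> Prop) q : 0 <= q ->
  (forall z1 z2 (s : R), S z1 -> S z2 -> 0 <= s <= 1 -> S (z2 + s%:C%C *: (z1 - z2))) ->
  (forall z, S z -> exists2 d, 0 < d &
     forall k, vnorm k < d -> vnorm (g (z + k) - g z) <= q * vnorm k) ->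
  forall z1 z2, S z1 -> S z2 -> vnorm (g z1 - g z2) <= q * vnorm (z1 - z2).
Proof.
move=> q0 convS loc z1 z2 Sz1 Sz2; set h := z1 - z2.
pose z (s : R) := z2 + s%:C%C *: h.
pose phi s := vnorm (g (z s) - g z2).
have phi0 : phi 0 = 0 by rewrite /phi /z scale0r addr0 subrr vnorm0.
have phi1 : phi 1 = vnorm (g z1 - g z2) by rewrite /phi /z scale1r /h addrCA subrr addr0.
suff: phi 1 - phi 0 <= q * vnorm h * (1 - 0) by rewrite phi0 phi1 !subr0 mulr1.
apply: increment_le_local_lipschitz ler01 _ => s s01.
have [d d0 gd] := loc (z s) (convS z1 z2 s Sz1 Sz2 s01).
have h1 : 0 < vnorm h + 1 by rewrite ltr_wpDl ?vnorm_ge0.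
exists (d / (vnorm h + 1)) => [|u _ us]; first by rewrite divr_gt0.
have zu : z u = z s + (u - s)%:C%C *: h.
  by rewrite /z -addrA -scalerDl rmorphB /= addrCA subrr addr0.
have hk : vnorm ((u - s)%:C%C *: h) <= `|u - s| * vnorm h by rewrite -cmod_real vnormZ.
apply: le_trans (dist_vnorm_le _ _) _; rewrite opprB addrA subrK zu.
rewrite mulrAC -mulrA; apply: le_trans (gd _ _) _; last by rewrite ler_wpM2l.
apply: le_lt_trans hk _; rewrite ltr_pdivlMr // in us; apply: le_lt_trans us.
by rewrite ler_wpM2l ?normr_ge0 // lerDl.
Qed.

End ContinuityArguments.

Section NewtonMap.
Variables (R : realType) (n : nat).
Local Notation C := (R[i]).
Local Notation vec := ('cV[C]_n).
Variable Y : 'M[C]_n.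
Local Notation kY := (n%:R * mnorm Y).

Lemma opnorm_leW (M : 'M[C]_n) c c' : c <= c' -> opnorm_le M c -> opnorm_le M c'.
Proof. by move=> cc' Mc v; apply: le_trans (Mc v) _; rewrite ler_wpM2r ?vnorm_ge0. Qed.

Lemma opnorm_id_minus_near (D D0 : 'M[C]_n) e : Y *m D0 = 1%:M -> mnorm (D - D0) <= e ->
  opnorm_le (1%:M - Y *m D) (kY * (n%:R * e)).
Proof.
move=> YD0 De v; rewrite -YD0 -mulmxBr -mulmxA.
apply: le_trans (vnorm_mulmx_mnorm _ _) _.
rewrite -[leRHS]mulrA ler_wpM2l ?mulr_ge0 ?mnorm_ge0 //.
apply: vnorm_mulmx_le => [|i j]; first exact: le_trans (mnorm_ge0 _) De.
by apply: le_trans De; rewrite -opprB mxE cmodN cmod_le_mnorm.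
Qed.

Lemma newton_map_local_lipschitz (G : vec -> vec) (DG : 'M[C]_n) z c q :
  cderiv G DG z -> c < q -> opnorm_le (1%:M - Y *m DG) c ->
  exists2 d, 0 < d & forall k, vnorm k < d ->
    vnorm ((z + k - Y *m G (z + k)) - (z - Y *m G z)) <= q * vnorm k.
Proof.
move=> dG cq YDc; have kY0 : 0 <= kY by rewrite mulr_ge0 ?mnorm_ge0.
have [d d0 Gd] := dG ((q - c) / (kY + 1)) (ltac:(by rewrite divr_gt0 ?subr_gt0 ?ltr_wpDl)).
exists d => // k kd.
have -> : z + k - Y *m G (z + k) - (z - Y *m G z) =
          (1%:M - Y *m DG) *m k - Y *m (G (z + k) - G z - DG *m k).
  rewrite mulmxBl mul1mx !mulmxBr mulmxA.
  move: (Y *m G _) (Y *m G z) (Y *m DG *m k) => a b e.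
  by apply/matrixP => i j; rewrite !mxE; ring.
apply: le_trans (vnormD _ _) _; rewrite vnormN.
apply: le_trans (lerD (YDc k) (vnorm_mulmx_mnorm _ _)) _.
have := Gd k kd; have := vnorm_ge0 k => k0 Gk.
have : kY * vnorm (G (z + k) - G z - DG *m k) <= (q - c) * vnorm k.
  apply: le_trans (ler_wpM2l kY0 Gk) _; rewrite mulrA ler_wpM2r //.
  by rewrite mulrCA ger_pMr ?subr_gt0 // ?ler_pdivrMr ?mul1r ?lerDl // ltr_wpDl.
lra.
Qed.

Lemma newton_zero_dist (G : vec -> vec) (S : vec -> Prop) q z x :
  (forall z1 z2, S z1 -> S z2 ->
     vnorm ((z1 - Y *m G z1) - (z2 - Y *m G z2)) <= q * vnorm (z1 - z2)) ->
  S z -> S x -> G z = 0 -> (1 - q) * vnorm (z - x) <= vnorm (Y *m G x).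
Proof.
move=> lip Sz Sx Gz0; have := lip z x Sz Sx; rewrite Gz0 mulmx0 subr0.
have -> : z - (x - Y *m G x) = (z - x) + Y *m G x by rewrite opprB addrA addrAC.
have := vnormD (z - x + Y *m G x) (- (Y *m G x)); rewrite addrK vnormN; lra.
Qed.

End NewtonMap.

Section KrawczykTest.
Variables (R : realType) (n : nat).
Local Notation C := (R[i]).
Local Notation vec := ('cV[C]_n).
Variables (H : vec -> R -> vec) (DH : vec -> R -> 'M[C]_n).
Variables (boxH : ibox R n -> rint R -> ibox R n) (boxDH : ibox R n -> rint R -> imx R n).
Variables (x0 : vec) (Y : 'M[C]_n) (t0 dt r eJ eH : R).
Local Notation kY := (n%:R * mnorm Y).
Local Notation T := (t0, t0 + dt).
Local Notation Ir := (cbox x0 r).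
Local Notation BH := (boxH (ptbox x0) T).
Local Notation BJ := (boxDH Ir T).

Hypothesis encH : encloses_v H boxH.
Hypothesis encDH : encloses_m DH boxDH.
Hypotheses (t0_ge0 : 0 <= t0) (dt_ge0 : 0 <= dt) (t0dt_le1 : t0 + dt <= 1) (r_gt0 : 0 < r).
Hypotheses (YD : Y *m DH x0 t0 = 1%:M) (H0 : H x0 t0 = 0).
Hypotheses (eJ_ge0 : 0 <= eJ) (eJ_small : 8 * n%:R * kY * eJ <= 1).
Hypotheses (eH_ge0 : 0 <= eH) (eH_small : 8 * kY * eH <= r).
Hypothesis BJ_near : forall M, in_imx BJ M -> mnorm (M - DH x0 t0) <= eJ.
Hypothesis BH_near : forall y, in_box BH y -> vnorm (y - H x0 t0) <= eH.

(* The factors 8 give: Krawczyk radius 2 kY eH + 4 n kY eJ r <= 3r/4, operator norms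
   |1 - Y.BJ| <= 4 n kY eJ <= 1/2 and |1 - Y DH(z, t)| <= n kY eJ <= 1/8, and zeros
   within 4 kY eH <= r/2 of x0.
   [lra] ignores section hypotheses, so they are moved to the goal before calling it. *)

Let kY_ge0 : 0 <= kY. Proof. by rewrite mulr_ge0 ?mnorm_ge0. Qed.

Let dJ_ge0 : 0 <= 2 * kY * eJ. Proof. exact/mulr_ge0/eJ_ge0/mulr_ge0/kY_ge0. Qed.

Let DH_in_BJ z t : in_box Ir z -> t0 <= t <= t0 + dt -> in_imx BJ (DH z t).
Proof. exact: @encDH _ T _ _ t0_ge0 t0dt_le1. Qed.

Let H_in_BH t : t0 <= t <= t0 + dt -> in_box BH (H x0 t).
Proof. exact: @encH _ T _ _ t0_ge0 t0dt_le1 (in_ptbox x0). Qed.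

Let t0_in_T : t0 <= t0 <= t0 + dt. Proof. by rewrite lexx lerDl. Qed.

Let id_minus_BJ_within : forall i k, cint_within (id_minus Y BJ i k) 0 (2 * kY * eJ).
Proof.
apply: id_minus_within eJ_ge0 YD _.
exact: imx_within_of_mnorm (DH_in_BJ (in_cbox_center x0 (ltW r_gt0)) t0_in_T) BJ_near.
Qed.

Lemma krawczyk_cbox_sub : box_sub (krawczyk x0 Y BH BJ Ir) Ir.
Proof.
have BH_within j : cint_within (BH j) 0 eH.
  by have := box_within_of_vnorm (H_in_BH t0_in_T) BH_near j; rewrite H0 mxE.
have K_within := krawczyk_within x0 (ltW r_gt0) eH_ge0 dJ_ge0 BH_within id_minus_BJ_within.
move=> v Kv i; apply: in_cbox_within (K_within i) _ (Kv i).
have := ler_wpM2r (ltW r_gt0) eJ_small; move: eH_small r_gt0; lra.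
Qed.

Lemma id_minus_BJ_opnorm M : in_imx (id_minus Y BJ) M -> opnorm_le M (1 / 2).
Proof.
move=> JM; apply: opnorm_leW (opnorm_le_within dJ_ge0 id_minus_BJ_within JM).
by move: eJ_small; lra.
Qed.

Hypothesis dH : forall t, t0 <= t <= t0 + dt -> forall z, cderiv (H^~ t) (DH z t) z.

Lemma newton_contraction t : t0 <= t <= t0 + dt -> forall z1 z2, in_box Ir z1 -> in_box Ir z2 ->
  vnorm ((z1 - Y *m H z1 t) - (z2 - Y *m H z2 t)) <= 3 / 4 * vnorm (z1 - z2).
Proof.
move=> tT; apply: (lipschitz_on_convex (g := fun z => z - Y *m H z t)) => [||z zI].
- lra.
- by move=> *; apply: cbox_convex.
have DH_near := BJ_near (DH_in_BJ zI tT).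
apply: newton_map_local_lipschitz (dH tT z) _ (opnorm_id_minus_near YD DH_near).
by move: eJ_small; lra.
Qed.

Lemma zero_near_center t z : t0 <= t <= t0 + dt -> in_box Ir z -> H z t = 0 ->
  vnorm (z - x0) <= r / 2.
Proof.
move=> tT zI Hz; have x0I := in_cbox_center x0 (ltW r_gt0).
have := BH_near (H_in_BH tT); rewrite H0 subr0 => /(ler_wpM2l kY_ge0) Hx0.
have := newton_zero_dist (newton_contraction tT) zI x0I Hz.
have := le_trans (vnorm_mulmx_mnorm Y (H x0 t)) Hx0.
by move: eH_small; lra.
Qed.

Lemma zero_unique t z1 z2 : t0 <= t <= t0 + dt -> in_box Ir z1 -> in_box Ir z2 ->
  H z1 t = 0 -> H z2 t = 0 -> z1 = z2.
Proof.
move=> tT z1I z2I Hz1 Hz2; apply/eqP; rewrite -subr_eq0; apply/eqP/vnorm_le0.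
have := newton_zero_dist (newton_contraction tT) z1I z2I Hz1.
by rewrite Hz2 mulmx0 vnorm0; have := vnorm_ge0 (z1 - z2); lra.
Qed.

Lemma path_near_center (xp : R -> vec) : path_continuous_on xp t0 (t0 + dt) -> xp t0 = x0 ->
  (forall t, t0 <= t <= t0 + dt -> H (xp t) t = 0) ->
  forall t, t0 <= t <= t0 + dt -> vnorm (xp t - x0) <= r / 2.
Proof.
move=> xpc xp0 xpH; have := r_gt0 => r0.
apply: (path_trapped (r := r)) xpc _ _; first lra.
  by rewrite xp0 subrr vnorm0; lra.
by move=> t tT /in_cbox_vnorm xpI; apply: zero_near_center tT xpI (xpH t tT).
Qed.

Theorem krawczyk_test (xp : R -> vec) : path_continuous_on xp t0 (t0 + dt) -> xp t0 = x0 ->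
  (forall t, t0 <= t <= t0 + dt -> H (xp t) t = 0) ->
  [/\ box_sub (krawczyk x0 Y BH BJ Ir) Ir,
      forall M, in_imx (id_minus Y BJ) M -> opnorm_le M (1 / 2) &
      forall t, t0 <= t <= t0 + dt ->
        in_box Ir (xp t) /\ forall z, in_box Ir z -> H z t = 0 -> z = xp t].
Proof.
move=> xpc xp0 xpH; split; [exact: krawczyk_cbox_sub | exact: id_minus_BJ_opnorm |].
move=> t tT; have xpI : in_box Ir (xp t).
  by apply: in_cbox_vnorm; have := path_near_center xpc xp0 xpH tT; move: r_gt0; lra.
by split => // z zI Hz; apply: zero_unique tT zI xpI Hz (xpH t tT).
Qed.

End KrawczykTest.

Lemma mul_inv1D_le1 (R : realFieldType) (a : R) : 0 <= a -> a * (1 + a)^-1 <= 1.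
Proof. by move=> a0; rewrite ler_pdivrMr ?ltr_wpDr // mul1r lerDr. Qed.

Lemma half_lt_inv_sqrt2 (R : rcfType) : 1 / 2 < (Num.sqrt 2)^-1 :> R.
Proof.
have sqrt2_lt2 : Num.sqrt 2 < 2 :> R.
  rewrite -[ltRHS](@ger0_norm _ 2) // -sqrtr_sqr ltr_sqrt ?exprn_gt0 //.
  by rewrite expr2 ltr_pMr ?ltr1n.
by rewrite mul1r ltf_pV2 ?posrE ?sqrtr_gt0.
Qed.

Section RadiusSelection.
Variables (R : realType) (n : nat).
Local Notation C := (R[i]).
Local Notation vec := ('cV[C]_n).
Variables (H : vec -> R -> vec) (DH : vec -> R -> 'M[C]_n).
Variables (boxH : ibox R n -> rint R -> ibox R n) (boxDH : ibox R n -> rint R -> imx R n).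
Hypotheses (convH : converges_v H boxH) (convDH : converges_m DH boxDH).

Lemma krawczyk_radius_exists x0 t0 dt0 eJ cH : 0 <= t0 <= 1 -> 0 < dt0 -> t0 + dt0 <= 1 ->
  0 < eJ -> 0 < cH -> exists r dt, [/\ 0 < r < 1, 0 < dt < 1, dt <= dt0,
    forall M, in_imx (boxDH (cbox x0 r) (t0, t0 + dt)) M -> mnorm (M - DH x0 t0) <= eJ &
    forall y, in_box (boxH (ptbox x0) (t0, t0 + dt)) y -> vnorm (y - H x0 t0) <= r * cH].
Proof.
move=> t0I dt0_gt0 t0dt0 eJ_gt0 cH_gt0; have [t0_ge0 _] := andP t0I.
have [dJ dJ_gt0 BJ_near] := convDH x0 t0I eJ_gt0.
pose r := Num.min (dJ / 2) (1 / 2).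
have r_gt0 : 0 < r by rewrite lt_min; apply/andP; split; lra.
have r_dJ : r <= dJ / 2 by rewrite ge_min lexx.
have r_half : r <= 1 / 2 by rewrite ge_min lexx orbT.
have [dH dH_gt0 BH_near] := convH x0 t0I (mulr_gt0 r_gt0 cH_gt0).
pose dt := Num.min (Num.min dJ dH) (Num.min dt0 (1 / 2)).
have dt_gt0 : 0 < dt by rewrite !lt_min dJ_gt0 dH_gt0 dt0_gt0 /=; lra.
have [dt_dJ dt_dH] : dt <= dJ /\ dt <= dH by rewrite !ge_min !lexx !orbT.
have [dt_dt0 dt_half] : dt <= dt0 /\ dt <= 1 / 2 by rewrite !ge_min !lexx !orbT.
have T_t0 : in_rint (t0, t0 + dt) t0 by rewrite /in_rint lexx lerDl ltW.
exists r, dt; split.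
- by rewrite r_gt0; lra.
- by rewrite dt_gt0; lra.
- exact: dt_dt0.
- apply: BJ_near; rewrite /rwidth //=; try lra.
    exact: in_cbox_center (ltW r_gt0).
  by apply: cbox_width_le; lra.
- apply: BH_near; rewrite /rwidth //=; try lra.
    exact: in_ptbox.
  exact: ptbox_width_le (ltW dH_gt0).
Qed.

End RadiusSelection.

Unset Implicit Arguments.

Theorem theorem4p1 (R : realType) (n m : nat)
    (F : 'cV[R[i]]_n -> 'cV[R[i]]_m -> 'cV[R[i]]_n) (p0 p1 : 'cV[R[i]]_m)
    (DH : 'cV[R[i]]_n -> R -> 'M[R[i]]_n)
    (D2H : 'cV[R[i]]_n -> R -> 'I_n -> 'M[R[i]]_n)
    (boxH : ibox R n -> rint R -> ibox R n)
    (boxDH : ibox R n -> rint R -> imx R n)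
    (boxD2H : ibox R n -> rint R -> iten R n)
    (xstar : 'cV[R[i]]_n) (t0 L dt0 : R) (xp : R -> 'cV[R[i]]_n) :
  affine_in_params F ->
  (* H(., t) is analytic: complex differentiable with Jacobian DH,
     whose derivative is D2H *)
  (forall t, 0 <= t <= 1 -> forall x,
     cderiv (fun y => homotopy F p0 p1 y t) (DH x t) x /\
     cderivM (fun y => DH y t) (D2H x t) x) ->
  (* interval extensions computed by interval arithmetic *)
  encloses_v (homotopy F p0 p1) boxH -> converges_v (homotopy F p0 p1) boxH ->
  encloses_m DH boxDH -> converges_m DH boxDH ->
  encloses_t D2H boxD2H ->
  0 <= t0 <= 1 ->
  homotopy F p0 p1 xstar t0 = 0 ->
  (* L >= || box d^2_x H(I_1, [0,1]) || *)
  0 < L ->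
  (forall D, in_iten (boxD2H (cbox xstar 1) (0, 1)) D -> tnorm_le D L) ->
  (* nonsingular solution path on [t0, t0 + dt0] included in [0,1] *)
  0 < dt0 -> t0 + dt0 <= 1 ->
  xp t0 = xstar ->
  path_continuous_on xp t0 (t0 + dt0) ->
  (forall t, t0 <= t <= t0 + dt0 ->
     homotopy F p0 p1 (xp t) t = 0 /\ DH (xp t) t \in unitmx) ->
  let Y := invmx (DH xstar t0) in
  exists r dt : R,
    [/\ 0 < r < 1, 0 < dt < 1 & dt <= dt0] /\
    [/\ box_sub (krawczyk xstar Y (boxH (ptbox xstar) (t0, t0 + dt))
                              (boxDH (cbox xstar r) (t0, t0 + dt))
                              (cbox xstar r))
              (cbox xstar r),
      (exists2 c : R, c < (Num.sqrt 2)^-1 &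
         forall M, in_imx (id_minus Y (boxDH (cbox xstar r) (t0, t0 + dt))) M ->
           opnorm_le M c) &
      (forall t, t0 <= t <= t0 + dt ->
         in_box (cbox xstar r) (xp t) /\
         forall z, in_box (cbox xstar r) z -> homotopy F p0 p1 z t = 0 -> z = xp t)].
Proof.
move=> _ dH encH convH encDH convDH _ t0I H0 _ _ dt0_gt0 t0dt0 xp0 xpc xp_zero Y.
set kY := n%:R * mnorm Y; have kY_ge0 : 0 <= kY by rewrite mulr_ge0 ?mnorm_ge0.
have YD : Y *m DH xstar t0 = 1%:M.
  by apply: mulVmx; rewrite -xp0; apply: (xp_zero t0 _).2; rewrite lexx lerDl ltW.
have [cJ_ge0 cH_ge0] : 0 <= 8 * n%:R * kY /\ 0 <= 8 * kY.
  by rewrite !mulr_ge0 ?ler0n ?mnorm_ge0.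
have [eJ_gt0 cH_gt0] : 0 < (1 + 8 * n%:R * kY)^-1 /\ 0 < (1 + 8 * kY)^-1.
  by rewrite !invr_gt0; split; lra.
have [r [dt [/andP[r_gt0 r_lt1] /andP[dt_gt0 dt_lt1] dt_dt0 BJ_near BH_near]]] :=
  krawczyk_radius_exists convH convDH xstar t0I dt0_gt0 t0dt0 eJ_gt0 cH_gt0.
have [t0_ge0 t0_le1] := andP t0I; have t0dt_le1 : t0 + dt <= 1 by lra.
have xpc_dt := path_continuous_on_sub (lerD (lexx t0) dt_dt0) xpc.
have dH_dt t (tT : t0 <= t <= t0 + dt) z := (dH t (ltac:(case/andP: tT => *; lra)) z).1.
have xp_zero_dt t (tT : t0 <= t <= t0 + dt) := (xp_zero t (ltac:(case/andP: tT => *; lra))).1.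
have eH_small : 8 * kY * (r * (1 + 8 * kY)^-1) <= r.
  by rewrite mulrCA ler_piMr ?(ltW r_gt0) //; apply: mul_inv1D_le1.
have [Ksub Jnorm path] := krawczyk_test encH encDH t0_ge0 (ltW dt_gt0) t0dt_le1 r_gt0 YD H0
  (ltW eJ_gt0) (mul_inv1D_le1 cJ_ge0) (ltW (mulr_gt0 r_gt0 cH_gt0)) eH_small
  BJ_near BH_near dH_dt xpc_dt xp0 xp_zero_dt.
exists r, dt; split; first by rewrite r_gt0 r_lt1 dt_gt0 dt_lt1.
by split => //; exists (1 / 2); [exact: half_lt_inv_sqrt2 | exact: Jnorm].
Qed.
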